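(* Let $\Bbbk$ be an algebraically closed field of characteristic zero, $G$ a finite group, $\chi:G\to\Bbbk^\times$ a linear character, $g\in Z(G)$, $n\geq2$ the multiplicative order of $\chi(g)$, and let $H$ be either the $\Bbbk$-algebra generated by $\Bbbk G$ and $z$ with relations $z^n=0$, $zs=\chi(s)sz$ ($s\in G$), or (when $\chi^n=1$ and $g^n\neq1$) the $\Bbbk$-algebra generated by $\Bbbk G$ and $z$ with relations $z^n=g^n-1$, $zs=\chi(s)sz$ ($s\in G$). Then $z^{l+1}\in(z^l(1-e_s))$ for all $0\leq s\leq p-1$ and $0\leq l\leq n-1$.
   Context: $\chi_0,\dots,\chi_{p-1}$ are the irreducible characters of $G$ and $e_s=\frac{\chi_s(1)}{|G|}\sum_{h\in G}\chi_s(h)h^{-1}$. $(a)$ denotes the two-sided ideal of $H$ generated by $a$. *)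

From HB Require Import structures.
From mathcomp Require Import all_boot all_order all_algebra all_fingroup all_solvable.
From mathcomp Require Import mxrepresentation.
Set Implicit Arguments. Unset Strict Implicit. Unset Printing Implicit Defensive.
Import GRing.Theory.
Local Open Scope ring_scope.

Definition in_ideal (A : nzRingType) (a b : A) : Prop :=
  exists (m : nat) (x y : 'I_m -> A), b = \sum_(i < m) x i * a * y i.

(* Image in A (via the linear extension of rho : G -> A to kG) of the central
   primitive idempotent e = chi(1)/|G| sum_{h in G} chi(h) h^{-1}, where chi is
   the character afforded by the representation rG of degree d. *)
Definition prim_idem (k : fieldType) (gT : finGroupType) (G : {group gT})
  (A : algType k) (rho : gT -> A) (d : nat) (rG : mx_representation k G d) : A :=
  \sum_(h in G) ((d%:R / (#|G|%:R)) * \tr (rG h)) *: rho (h^-1)%g.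

From HB Require Import structures.
From mathcomp Require Import all_boot all_order all_algebra all_fingroup all_solvable.
From mathcomp Require Import mxrepresentation.
Import GRing.Theory.
Local Open Scope ring_scope.

(* Put r := rho g.  As g is central, Schur's lemma makes it act on the
   irreducible representation by a nonzero scalar lam, whence e r = lam e for
   the idempotent e.  Modulo I := (z^l (1 - e)) we have z^l = z^l e, so
   z^l r = lam z^l and z^(l+1) r = lam z^(l+1); but z^(l+1) r = chi(g) z^l r z
   = chi(g) lam z^(l+1) as well, and chi(g) <> 1 forces z^(l+1) into I. *)

Section IdealMembership.

Variables (A : nzRingType) (a : A).

Lemma in_ideal_id : in_ideal a a.
Proof. by exists 1%N, (fun=> 1), (fun=> 1); rewrite big_ord1 mul1r mulr1. Qed.

Lemma in_idealD b c : in_ideal a b -> in_ideal a c -> in_ideal a (b + c).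
Proof.
move=> [m [x [y ->]]] [m' [x' [y' ->]]].
pose glue (f : 'I_m -> A) (f' : 'I_m' -> A) i :=
  match split i with inl j => f j | inr j => f' j end.
exists (m + m')%N, (glue x x'), (glue y y').
by rewrite big_split_ord /glue; congr (_ + _); apply: eq_bigr => j _;
  rewrite (unsplitK (inl _)) || rewrite (unsplitK (inr _)).
Qed.

Lemma in_idealMl x b : in_ideal a b -> in_ideal a (x * b).
Proof.
move=> [m [x' [y ->]]]; exists m, (fun i => x * x' i), y.
by rewrite mulr_sumr; apply: eq_bigr => i _; rewrite !mulrA.
Qed.

Lemma in_idealMr b y : in_ideal a b -> in_ideal a (b * y).
Proof.
move=> [m [x [y' ->]]]; exists m, x, (fun i => y' i * y).
by rewrite mulr_suml; apply: eq_bigr => i _; rewrite !mulrA.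
Qed.

Lemma in_idealN b : in_ideal a b -> in_ideal a (- b).
Proof. by rewrite -mulN1r; apply: in_idealMl. Qed.

Lemma in_idealB b c : in_ideal a b -> in_ideal a c -> in_ideal a (b - c).
Proof. by move=> Ib /in_idealN; apply: in_idealD. Qed.

End IdealMembership.

Lemma in_idealZ (k : nzRingType) (A : algType k) (a b : A) (c : k) :
  in_ideal a b -> in_ideal a (c *: b).
Proof. by rewrite -mulr_algl; apply: in_idealMl. Qed.

Lemma in_ideal_skew_commute {k : fieldType} {A : algType k} {y z r e : A} {lam q : k} :
  y * z = z * y -> e * r = lam *: e -> z * r = q *: (r * z) -> lam != 0 -> q != 1 ->
  in_ideal (y * (1 - e)) (y * z).
Proof.
move=> cyz eEr zEr lam_neq0 q_neq1; set a := y * (1 - e).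
have yr_lam : in_ideal a (y * r - lam *: y).
  have -> : y * r - lam *: y = a * r - lam *: a.
    by rewrite /a mulrBr mulr1 mulrBl -mulrA eEr -scalerAr scalerBr opprB addrA subrK.
  by apply: in_idealB; [apply: in_idealMr | apply: in_idealZ]; apply: in_ideal_id.
have yzr_lam : in_ideal a (y * z * r - lam *: (y * z)).
  by rewrite cyz -mulrA scalerAr -mulrBr; apply: in_idealMl yr_lam.
have yzr_qlam : in_ideal a (y * z * r - (q * lam) *: (y * z)).
  have -> : y * z * r - (q * lam) *: (y * z) = q *: ((y * r - lam *: y) * z).
    by rewrite -mulrA zEr -scalerAr mulrA mulrBl -scalerAl scalerBr scalerA.
  by apply/in_idealZ/in_idealMr.
have lq_neq0 : lam * (1 - q) != 0 by rewrite mulf_neq0 // subr_eq0 eq_sym.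
rewrite -[y * z](scalerK lq_neq0); apply: in_idealZ.
have -> : (lam * (1 - q)) *: (y * z) = (y * z * r - (q * lam) *: (y * z))
                                      - (y * z * r - lam *: (y * z)).
  by rewrite opprB [RHS]addrC addrA subrK mulrBr mulr1 scalerBl (mulrC q).
exact: in_idealB yzr_qlam yzr_lam.
Qed.

Lemma prim_root_neq1 {R : nzRingType} {n} {x : R} :
  (1 < n)%N -> n.-primitive_root x -> x != 1.
Proof.
by move=> n_gt1 prim_x; rewrite -[x]expr1 -(prim_order_dvd prim_x) dvdn1 gtn_eqF.
Qed.

Lemma repr_center_scalar {k : closedFieldType} {gT : finGroupType} {G : {group gT}}
    {d} {rG : mx_representation k G d} {g} :
  mx_irreducible rG -> g \in ('Z(G))%g -> exists2 lam : k, rG g = lam%:M & lam != 0.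
Proof.
move=> irrG /setIP[Gg /centP cGg].
have /is_scalar_mxP[lam rGg] : is_scalar_mx (rG g).
  apply: mx_abs_irr_cent_scalar (group_closure_closed_field irrG) _ _.
  by apply/centgmxP => x Gx; rewrite -!repr_mxM // cGg.
exists lam => //; have [d_gt0 _] := (mx_irrP rG).1 irrG.
have := repr_mx_unit rG Gg; rewrite rGg unitmxE det_scalar unitfE.
by apply: contraNneq => ->; rewrite expr0n gtn_eqF.
Qed.

Lemma prim_idem_mul_scalar {k : fieldType} {gT : finGroupType} {G : {group gT}}
    {A : algType k} {rho : gT -> A} {d} {rG : mx_representation k G d} {g lam} :
  {in G &, {morph rho : s t / (s * t)%g >-> s * t}} -> g \in G -> rG g = lam%:M ->
  prim_idem rho rG * rho g = lam *: prim_idem rho rG.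
Proof.
move=> rhoM Gg rGg; rewrite /prim_idem mulr_suml scaler_sumr.
rewrite (reindex_inj (mulgI g)).
apply: eq_big => [h | h Ggh] /=; first by rewrite groupMl.
have Gh : h \in G by rewrite -(groupMl _ Gg).
rewrite -scalerAl -rhoM ?groupV // invMg -mulgA mulVg mulg1 scalerA.
by rewrite repr_mxM // rGg mul_scalar_mx mxtraceZ mulrCA.
Qed.

Theorem lemma4p1 (k : closedFieldType) (Hchar : [pchar k] =i pred0)
  (gT : finGroupType) (G : {group gT})
  (chi : gT -> k)
  (chiM : forall s t, s \in G -> t \in G -> chi (s * t)%g = chi s * chi t)
  (chi_neq0 : forall s, s \in G -> chi s != 0)
  (g : gT) (gZ : g \in ('Z(G))%g)
  (n : nat) (n_ge2 : (2 <= n)%N) (ord_chig : n.-primitive_root (chi g))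
  (A : algType k) (rho : gT -> A)
  (rho1 : rho 1%g = 1)
  (rhoM : forall s t, s \in G -> t \in G -> rho (s * t)%g = rho s * rho t)
  (z : A)
  (zs : forall s, s \in G -> z * rho s = chi s *: (rho s * z))
  (rel : z ^+ n = 0 \/
         ((forall s, s \in G -> chi s ^+ n = 1) /\ (g ^+ n)%g != 1%g /\
          z ^+ n = rho g ^+ n - 1)) :
  forall (d : nat) (rG : mx_representation k G d), mx_irreducible rG ->
  forall l : nat, (l < n)%N ->
    in_ideal (z ^+ l * (1 - prim_idem rho rG)) (z ^+ l.+1).
Proof.
move=> d rG irrG l _.
have Gg : g \in G by case/setIP: gZ.
have [lam rGg lam_neq0] := repr_center_scalar irrG gZ.
rewrite exprSr; apply: in_ideal_skew_commute (zs g Gg) lam_neq0 _.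
- by rewrite -exprSr exprS.
- exact: prim_idem_mul_scalar rhoM Gg rGg.
- exact: prim_root_neq1 ord_chig.
Qed.
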